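(* Let $U_2$ be a unitary matrix with real entries having a unique (up to scalars) eigenvector $|\phi_0\rangle$ of eigenvalue $1$, chosen with real entries and norm $1$; let $|\mu\rangle$ be a unit vector with real entries, $U_1=I-2|\mu\rangle\langle\mu|$, $U=U_2U_1$, and $|\tilde\phi_0\rangle=|\phi_0\rangle-\langle\mu|\phi_0\rangle|\mu\rangle$. Let $\varepsilon\in(0,1)$. For every $T\ge\max\{1,\mathsf{QHT}_\varepsilon(U_2,|\mu\rangle)\}$, the procedure $\mathbf{Detect}(U,1/T,\varepsilon)$ accepts $|\tilde\phi_0\rangle$ with probability $\|\tilde\phi_0\|^2-O(\varepsilon)$ if $\langle\phi_0|\mu\rangle\ne0$, and accepts with probability $0$ otherwise. Moreover the number of applications of $\text{c-}U$ is $O(\log(1/\varepsilon)\cdot T)$.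
   Context: Decompose $|\tilde\phi_0\rangle$ in eigenvectors of the real unitary $U$: $|\tilde\phi_0\rangle=\delta_0|w_0\rangle+\sum_{1\le j\le J}\delta_j(|w_j^+\rangle+|w_j^-\rangle)+\delta_{-1}|w_{-1}\rangle$ with real coefficients, where $|w_0\rangle$ (resp. $|w_{-1}\rangle$) is a unit eigenvector of eigenvalue $1$ (resp. $-1$), and $|w_j^\pm\rangle$ are unit eigenvectors of eigenvalues $e^{\pm i\alpha_j}$, $0<\alpha_j<\pi$, with $|w_j^-\rangle=\overline{|w_j^+\rangle}$. $\mathit{QH}$ is the random variable equal to $1/\alpha_j$ with probability $2\delta_j^2$, to $1/\pi$ with probability $\delta_{-1}^2$, and to $0$ otherwise. The quantum $\varepsilon$-error $|\mu\rangle$-hitting time of $U_2$ is $\mathsf{QHT}_\varepsilon(U_2,|\mu\rangle)=\min\{y:\Pr[\mathit{QH}>y]\le\varepsilon\}$. ''Accepts with probability $p$'' on an unnormalized input means the accepting branch has squared norm $p$. $\mathbf{Estimate}$ is the standard phase estimation circuit for $U$ with precision $\Delta$ (on an eigenvector with eigenphase $\alpha\in(-\pi,\pi]$ it outputs $\alpha$ within $\Delta$ with error probability at most $1/3$, outputs $0$ with certainty on a $1$-eigenvector, and uses $O(1/\Delta)$ calls to $\text{c-}U$ and its inverse). $\mathbf{Detect}(U,\Delta,\varepsilon)$ on input $|\psi\rangle$: apply $\Theta(\log(1/\varepsilon))$ times $\mathbf{Estimate}$ with precision $\Delta$ to the same state $|\psi\rangle$; accept if at least one estimated phase is nonzero,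 otherwise reject. *)

From HB Require Import structures.
From mathcomp Require Import all_boot all_order all_algebra.
From mathcomp Require Import complex.
From mathcomp Require Import boolp classical_sets reals exp trigo.

Set Implicit Arguments.
Unset Strict Implicit.
Unset Printing Implicit Defensive.

Import Order.TTheory GRing.Theory Num.Theory.
Local Open Scope ring_scope.
Local Open Scope complex_scope.

Section QuantumWalkDefs.
Variable R : realType.
Local Notation C := R[i].

Definition expi (a : R) : C := cos a +i* sin a.

Definition csqn (z : C) : R := complex.Re z ^+ 2 + complex.Im z ^+ 2.

Definition vnorm2 n (v : 'cV[C]_n) : R := \sum_i csqn (v i 0).

Definition conjmx m n (A : 'M[C]_(m, n)) : 'M[C]_(m, n) := map_mx conjc A.
Definition adjmx m n (A : 'M[C]_(m, n)) : 'M[C]_(n, m) := (conjmx A)^T.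

Definition inner n (u v : 'cV[C]_n) : C := (adjmx u *m v) 0 0.

Definition unitary n (A : 'M[C]_n) : Prop := adjmx A *m A = 1%:M.

Definition real_mx m n (A : 'M[C]_(m, n)) : Prop :=
  forall i j, complex.Im (A i j) = 0.

Definition reflection n (mu : 'cV[C]_n) : 'M[C]_n :=
  1%:M - 2%:R *: (mu *m adjmx mu).

Definition tilde_phi n (phi0 mu : 'cV[C]_n) : 'cV[C]_n :=
  phi0 - inner mu phi0 *: mu.

(* The decomposition
     v = d0 w0 + sum_{j<J} d_j (w_j^+ + w_j^-) + dm1 w_{-1}
   of v in eigenvectors of the real unitary U, with real coefficients,
   w_j^- = conj(w_j^+), U w_j^+ = e^{i al_j} w_j^+, 0 < al_j < pi,
   the al_j pairwise distinct (one term per eigenphase).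
   A unit eigenvector is only required when its coefficient is nonzero
   (a vanishing component need not correspond to an actual eigenvalue). *)
Definition eigen_decomp n (U : 'M[C]_n) (v : 'cV[C]_n) (J : nat)
    (d0 dm1 : R) (d al : 'I_J -> R) (w0 wm1 : 'cV[C]_n) (wp : 'I_J -> 'cV[C]_n)
    : Prop :=
  [/\ v = d0%:C *: w0 + \sum_(j < J) (d j)%:C *: (wp j + conjmx (wp j))
          + dm1%:C *: wm1,
      d0 = 0 \/ (vnorm2 w0 = 1 /\ U *m w0 = w0),
      dm1 = 0 \/ (vnorm2 wm1 = 1 /\ U *m wm1 = - wm1),
      forall j, (0 < al j < pi) /\
        (d j = 0 \/ (vnorm2 (wp j) = 1 /\ U *m wp j = expi (al j) *: wp j))
    & injective al].

(* Pr[QH > y] where QH = 1/al_j w.p. 2 d_j^2, = 1/pi w.p. dm1^2, = 0 otherwise *)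
Definition QH_tail (J : nat) (d al : 'I_J -> R) (dm1 : R) (y : R) : R :=
  if y < 0 then 1
  else \sum_(j < J | y < (al j)^-1) 2 * d j ^+ 2
       + (if y < pi^-1 then dm1 ^+ 2 else 0).

(* QHT_eps = min { y | Pr[QH > y] <= eps }  (the minimum exists; we write inf) *)
Definition QHT (eps : R) (J : nat) (d al : 'I_J -> R) (dm1 : R) : R :=
  inf [set y : R | QH_tail d al dm1 y <= eps].

Definition close_phase (Delta o a : R) : Prop :=
  exists k : int, `|o - a - k%:~R * (2 * pi)| < Delta.

(* Estimate for U with precision Delta, described by its measurement
   operators: E o = (I (x) <o|) Circuit (I (x) |0>), outcome o having
   label (estimated phase) lab o.
   - the circuit is an isometry: sum_o E_o^* E_o = I;
   - on an eigenvector w with eigenphase a in (-pi, pi], the first register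
     is left in (a multiple of) w and, with probability >= 2/3, the output
     is within Delta of a;
   - on a 1-eigenvector the output is 0 with certainty. *)
Definition is_estimate n (U : 'M[C]_n) (Delta : R) m (lab : 'I_m -> R)
    (E : 'I_m -> 'M[C]_n) : Prop :=
  [/\ \sum_(o < m) adjmx (E o) *m E o = 1%:M,
      forall (w : 'cV[C]_n) (a : R), - pi < a <= pi ->
        U *m w = expi a *: w ->
        (forall o, exists c : C, E o *m w = c *: w) /\
        2 / 3 * vnorm2 w <=
          \sum_(o < m | `[< close_phase Delta (lab o) a >]) vnorm2 (E o *m w)
    & forall w : 'cV[C]_n, U *m w = w ->
        \sum_(o < m | lab o == 0) vnorm2 (E o *m w) = vnorm2 w].

(* Run Estimate successively (fresh output registers) along the outcome
   sequence s; the result is the (unnormalized) branch of the first register. *)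
Definition apply_seq n m (E : 'I_m -> 'M[C]_n) (s : seq 'I_m) (v : 'cV[C]_n)
    : 'cV[C]_n :=
  foldl (fun x o => E o *m x) v s.

(* Detect with k repetitions: squared norm of the accepting branch
   (at least one estimated phase nonzero). *)
Definition detect_accept n m (lab : 'I_m -> R) (E : 'I_m -> 'M[C]_n) (k : nat)
    (v : 'cV[C]_n) : R :=
  \sum_(t : k.-tuple 'I_m | has (fun o => lab o != 0) t)
     vnorm2 (apply_seq E t v).

Definition detect_reps (c0 eps : R) : nat := `|Num.ceil (c0 * ln eps^-1)|%N.

End QuantumWalkDefs.

From Pilot Require Import Defs.
From mathcomp Require Import all_boot all_order all_algebra.
From mathcomp Require Import complex.
From mathcomp Require Import boolp classical_sets reals exp trigo.
From mathcomp Require Import ring lra zify.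
Import Order.TTheory GRing.Theory Num.Theory.
Import Pilot.Defs.

Set Implicit Arguments.
Unset Strict Implicit.
Unset Printing Implicit Defensive.
Local Open Scope ring_scope.
Local Open Scope complex_scope.

(* Detect rejects only on branches where every Estimate outcome is 0.  The
   walk operator U = U2 U1 is real and unitary, so |phi~_0> splits into
   orthogonal eigencomponents with distinct eigenphases, and each round of
   Estimate keeps every component an eigenvector.  Rejection is therefore
   additive over the components, and multiplicative over rounds on each one:
   a component of eigenphase at least 1/T survives a round with weight at most
   1/3, while the components of eigenphase below 1/T carry total weight at most
   eps by the choice T >= QHT_eps.  With ln(1/eps)/ln 3 rounds the rejected
   weight is at most 2 eps.  If <phi_0|mu> = 0 then |phi~_0> = |phi_0> is a
   1-eigenvector of U and is never accepted; if <phi_0|mu> <> 0, U has no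
   1-eigenvector at all. *)

Section Inner.
Variable R : realType.
Local Notation C := R[i].

Lemma csqnE (z : C) : (csqn z)%:C = conjc z * z.
Proof.
case: z => a b; rewrite /csqn /=; apply/eqP; rewrite eq_complex /=.
by apply/andP; split; apply/eqP; ring.
Qed.

Lemma csqn_ge0 (z : C) : 0 <= csqn z.
Proof. by rewrite /csqn addr_ge0 // sqr_ge0. Qed.

Lemma csqn_real (r : R) : csqn r%:C = r ^+ 2.
Proof. by rewrite /csqn /= expr0n /= addr0. Qed.

Lemma vnorm2_ge0 n (v : 'cV[C]_n) : 0 <= vnorm2 v.
Proof. by rewrite /vnorm2 sumr_ge0 // => i _; exact: csqn_ge0. Qed.

Lemma vnorm20 n : vnorm2 (0 : 'cV[C]_n) = 0.
Proof. by rewrite /vnorm2 big1 // => i _; rewrite mxE csqn_real expr0n. Qed.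

Lemma vnorm2_conj n (v : 'cV[C]_n) : vnorm2 (conjmx v) = vnorm2 v.
Proof.
by apply: eq_bigr => i _; rewrite mxE; case: (v i 0) => a b; rewrite /csqn /= sqrrN.
Qed.

Lemma conjmxM m n p (A : 'M[C]_(m, n)) (B : 'M[C]_(n, p)) :
  conjmx (A *m B) = conjmx A *m conjmx B.
Proof. exact: map_mxM. Qed.

Lemma conjmxZ m n (c : C) (A : 'M[C]_(m, n)) : conjmx (c *: A) = c^* *: conjmx A.
Proof. by apply/matrixP => i j; rewrite !mxE rmorphM. Qed.

Lemma conjmx_real m n (A : 'M[C]_(m, n)) : real_mx A -> conjmx A = A.
Proof.
move=> Ar; apply/matrixP => i j; rewrite mxE; move: (Ar i j).
by case: (A i j) => a b /= ->; rewrite oppr0.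
Qed.

Lemma adjmxM m n p (A : 'M[C]_(m, n)) (B : 'M[C]_(n, p)) :
  adjmx (A *m B) = adjmx B *m adjmx A.
Proof. by rewrite /adjmx conjmxM trmx_mul. Qed.

Lemma adjmxK m n (A : 'M[C]_(m, n)) : adjmx (adjmx A) = A.
Proof. by apply/matrixP => i j; rewrite !mxE conjcK. Qed.

Lemma adjmxZ m n (c : C) (A : 'M[C]_(m, n)) : adjmx (c *: A) = c^* *: adjmx A.
Proof. by apply/matrixP => i j; rewrite !mxE rmorphM. Qed.

Lemma adjmxB m n (A B : 'M[C]_(m, n)) : adjmx (A - B) = adjmx A - adjmx B.
Proof. by apply/matrixP => i j; rewrite !mxE rmorphB. Qed.

Lemma adjmx1 n : adjmx (1%:M : 'M[C]_n) = 1%:M.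
Proof. by apply/matrixP => i j; rewrite !mxE rmorph_nat eq_sym. Qed.

Lemma innerE n (u v : 'cV[C]_n) : inner u v = \sum_j (u j 0)^* * v j 0.
Proof. by rewrite /inner mxE; apply: eq_bigr => j _; rewrite !mxE. Qed.

Lemma inner_vnorm2 n (v : 'cV[C]_n) : inner v v = (vnorm2 v)%:C.
Proof.
by rewrite innerE /vnorm2 rmorph_sum; apply: eq_bigr => j _; rewrite -csqnE.
Qed.

Lemma inner_conj n (u v : 'cV[C]_n) : inner v u = (inner u v)^*.
Proof.
by rewrite !innerE rmorph_sum; apply: eq_bigr => j _; rewrite rmorphM /= conjcK mulrC.
Qed.

Lemma inner_mulmx n (A : 'M[C]_n) (u v : 'cV[C]_n) :
  inner u (A *m v) = inner (adjmx A *m u) v.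
Proof. by rewrite /inner adjmxM adjmxK mulmxA. Qed.

Lemma innerZr n (c : C) (u v : 'cV[C]_n) : inner u (c *: v) = c * inner u v.
Proof. by rewrite /inner -scalemxAr mxE. Qed.

Lemma innerZl n (c : C) (u v : 'cV[C]_n) : inner (c *: u) v = c^* * inner u v.
Proof. by rewrite /inner adjmxZ -scalemxAl mxE. Qed.

Lemma innerBr n (u v w : 'cV[C]_n) : inner u (v - w) = inner u v - inner u w.
Proof. by rewrite /inner mulmxBr !mxE. Qed.

Lemma innerBl n (u v w : 'cV[C]_n) : inner (u - v) w = inner u w - inner v w.
Proof. by rewrite /inner adjmxB mulmxBl !mxE. Qed.

Lemma inner_sumr n (I : finType) (u : 'cV[C]_n) (x : I -> 'cV[C]_n) :
  inner u (\sum_i x i) = \sum_i inner u (x i).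
Proof. by rewrite /inner mulmx_sumr summxE. Qed.

Lemma inner_suml n (I : finType) (u : 'cV[C]_n) (x : I -> 'cV[C]_n) :
  inner (\sum_i x i) u = \sum_i inner (x i) u.
Proof.
rewrite inner_conj inner_sumr rmorph_sum.
by apply: eq_bigr => i _; rewrite [RHS]inner_conj.
Qed.

Lemma vnorm2Z n (c : C) (v : 'cV[C]_n) : vnorm2 (c *: v) = csqn c * vnorm2 v.
Proof.
apply: (@complexI R); rewrite -inner_vnorm2 innerZl innerZr inner_vnorm2.
by rewrite rmorphM /= csqnE mulrA.
Qed.

Lemma vnorm2_real_scale (r : R) n (w : 'cV[C]_n) : r = 0 \/ vnorm2 w = 1 ->
  vnorm2 (r%:C *: w) = r ^+ 2.
Proof.
by rewrite vnorm2Z csqn_real => -[->|->]; rewrite ?mulr1 // expr0n mul0r.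
Qed.

Lemma vnorm2_sum_orth n (I : finType) (x : I -> 'cV[C]_n) :
  (forall i j, i != j -> inner (x i) (x j) = 0) ->
  vnorm2 (\sum_i x i) = \sum_i vnorm2 (x i).
Proof.
move=> orth; apply: (@complexI R); rewrite -inner_vnorm2 rmorph_sum inner_suml.
apply: eq_bigr => i _; rewrite inner_sumr (bigD1 i) //= big1 ?addr0 ?inner_vnorm2 //.
by move=> j ji; apply: orth; rewrite eq_sym.
Qed.

Lemma mx11_scalar (B : 'M[C]_1) : B = (B 0 0)%:M.
Proof. by apply/matrixP => i j; rewrite !ord1 mxE eqxx mulr1n. Qed.

Lemma eigvec_orth n (U : 'M[C]_n) (x y : 'cV[C]_n) (l1 l2 : C) :
  adjmx U *m U = 1%:M -> U *m x = l1 *: x -> U *m y = l2 *: y ->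
  l1^* * l1 = 1 -> l1 != l2 -> inner x y = 0.
Proof.
move=> Uu Ux Uy l1u l12.
have xy : inner x y = l1^* * l2 * inner x y.
  rewrite -{1}[y]mul1mx -Uu -mulmxA inner_mulmx adjmxK Ux Uy innerZl innerZr.
  by rewrite mulrA.
have l1l2 : l1^* * l2 != 1.
  apply: contra l12 => /eqP e; apply/eqP.
  by rewrite -[l2]mul1r -l1u mulrAC e mul1r.
have /eqP : (1 - l1^* * l2) * inner x y = 0 by rewrite mulrBl mul1r -xy subrr.
by rewrite mulf_eq0 subr_eq0 eq_sym (negbTE l1l2) => /eqP.
Qed.

Lemma conjmx_eigvec n (U : 'M[C]_n) (w : 'cV[C]_n) (l : C) :
  conjmx U = U -> U *m w = l *: w -> U *m conjmx w = l^* *: conjmx w.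
Proof. by move=> Ur Uw; rewrite -{1}Ur -conjmxM Uw conjmxZ. Qed.

End Inner.

Section Reflection.
Variable R : realType.
Local Notation C := R[i].
Variables (n : nat) (mu : 'cV[C]_n).

Lemma reflectionE w : reflection mu *m w = w - (2%:R * inner mu w) *: mu.
Proof.
rewrite /reflection mulmxBl mul1mx -scalemxAl -mulmxA [adjmx mu *m w]mx11_scalar.
by rewrite mul_mx_scalar scalerA.
Qed.

Lemma adjmx_reflection : adjmx (reflection mu) = reflection mu.
Proof. by rewrite /reflection adjmxB adjmxZ adjmx1 adjmxM adjmxK rmorph_nat. Qed.

Hypothesis mu_unit : vnorm2 mu = 1.

Lemma reflectionK : reflection mu *m reflection mu = 1%:M.
Proof.
have muK : adjmx mu *m mu = 1%:M.
  by rewrite [LHS]mx11_scalar -[(_ *m _) 0 0]/(inner mu mu) inner_vnorm2 mu_unit.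
have PP : mu *m adjmx mu *m (mu *m adjmx mu) = mu *m adjmx mu.
  by rewrite mulmxA -(mulmxA mu) muK mulmx1.
rewrite /reflection mulmxBl mul1mx mulmxBr mulmx1 -scalemxAl -scalemxAr PP.
rewrite scalerA opprB addrA -addrA -scalerBl.
have -> : 2%:R * 2%:R - 2%:R = 2%:R :> C by rewrite -natrM -natrB.
by rewrite subrK.
Qed.

Lemma unitary_mul_reflection (U2 : 'M[C]_n) : unitary U2 ->
  adjmx (U2 *m reflection mu) *m (U2 *m reflection mu) = 1%:M.
Proof.
move=> U2u; rewrite adjmxM adjmx_reflection -mulmxA (mulmxA (adjmx U2)) U2u.
by rewrite mul1mx reflectionK.
Qed.

Lemma vnorm2_tilde_phi_le1 phi0 : vnorm2 phi0 = 1 -> vnorm2 (tilde_phi phi0 mu) <= 1.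
Proof.
move=> phi0_unit; set c := inner mu phi0.
have : (vnorm2 (tilde_phi phi0 mu))%:C = (1 - csqn c)%:C.
  rewrite -inner_vnorm2 /tilde_phi -/c innerBl !innerBr !innerZl !innerZr.
  rewrite !inner_vnorm2 phi0_unit mu_unit -/c (@inner_conj _ _ mu phi0) -/c.
  by rewrite rmorphB /= csqnE; ring.
by move/complexI => ->; rewrite gerDl oppr_le0 csqn_ge0.
Qed.

End Reflection.

Lemma conjmx_reflection (R : realType) n (mu : 'cV[R[i]]_n) :
  conjmx (reflection mu) = reflection (conjmx mu).
Proof.
apply/matrixP => i j; rewrite !mxE rmorphB rmorphM rmorph_sum !rmorph_nat.
by congr (_ - _ * _); apply: eq_bigr => k _; rewrite !mxE rmorphM.
Qed.

Lemma sum_tupleS (R : nmodType) (T : finType) k (F : k.+1.-tuple T -> R) :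
  \sum_t F t = \sum_(o : T) \sum_(t : k.-tuple T) F (cons_tuple o t).
Proof.
rewrite pair_big /= (reindex (fun p : T * k.-tuple T => cons_tuple p.1 p.2)) //=.
exists (fun t => (thead t, behead_tuple t)) => [[o t] _|t _] /=.
  by congr pair; apply: val_inj.
by rewrite [t in RHS]tuple_eta.
Qed.

Lemma sum_tuple0 (R : nmodType) (T : finType) (F : 0.-tuple T -> R) :
  \sum_t F t = F [tuple].
Proof. by rewrite (big_pred1 [tuple]) // => t; rewrite [t]tuple0 /= eqxx. Qed.

Section Detect.
Variable R : realType.
Local Notation C := R[i].
Variables (n m : nat) (lab : 'I_m -> R) (E : 'I_m -> 'M[C]_n).

Definition detect_reject k (v : 'cV[C]_n) : R :=
  \sum_(t : k.-tuple 'I_m | ~~ has (fun o => lab o != 0) t)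
     vnorm2 (apply_seq E t v).

Lemma apply_seqZ t (c : C) v : apply_seq E t (c *: v) = c *: apply_seq E t v.
Proof. by elim: t v => [|o t IH] v //=; rewrite -scalemxAr IH. Qed.

Lemma detect_reject0 v : detect_reject 0 v = vnorm2 v.
Proof. by rewrite /detect_reject big_mkcond sum_tuple0. Qed.

Lemma detect_rejectS k v :
  detect_reject k.+1 v = \sum_(o | lab o == 0) detect_reject k (E o *m v).
Proof.
rewrite /detect_reject big_mkcond sum_tupleS [RHS]big_mkcond.
apply: eq_bigr => o _ /=; case: eqP => _ /=; first by rewrite [RHS]big_mkcond.
by rewrite big1_eq.
Qed.

Lemma detect_reject_ge0 k v : 0 <= detect_reject k v.
Proof. by rewrite sumr_ge0 // => t _; exact: vnorm2_ge0. Qed.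

Lemma detect_rejectZ k (c : C) v : detect_reject k (c *: v) = csqn c * detect_reject k v.
Proof.
by rewrite /detect_reject mulr_sumr; apply: eq_bigr => t _; rewrite apply_seqZ vnorm2Z.
Qed.

Lemma detect_reject_eigvec (c : 'I_m -> C) k x : (forall o, E o *m x = c o *: x) ->
  detect_reject k x = (\sum_(o | lab o == 0) csqn (c o)) ^+ k * vnorm2 x.
Proof.
move=> Ex; elim: k => [|k IH]; first by rewrite detect_reject0 expr0 mul1r.
rewrite detect_rejectS exprS -mulrA mulr_suml; apply: eq_bigr => o _.
by rewrite Ex detect_rejectZ IH.
Qed.

Lemma detect_reject_sum_orth (I : finType) k (x : I -> 'cV[C]_n) :
  (forall i j, i != j -> inner (x i) (x j) = 0) ->
  (forall o i, exists c, E o *m x i = c *: x i) ->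
  detect_reject k (\sum_i x i) = \sum_i detect_reject k (x i).
Proof.
elim: k x => [|k IH] x orth eig.
  by rewrite detect_reject0 vnorm2_sum_orth //; apply: eq_bigr => i _; rewrite detect_reject0.
rewrite detect_rejectS (eq_bigr (fun o => \sum_i detect_reject k (E o *m x i))).
  by rewrite exchange_big; apply: eq_bigr => i _; rewrite detect_rejectS.
move=> o _; rewrite mulmx_sumr IH // => [i j ij|o' i].
  by have [c1 ->] := eig o i; have [c2 ->] := eig o j; rewrite innerZl innerZr orth ?mulr0.
have [c1 ->] := eig o i; have [c2 E'x] := eig o' i.
by exists c2; rewrite -scalemxAr E'x !scalerA mulrC.
Qed.

Hypothesis E_isometry : \sum_o adjmx (E o) *m E o = 1%:M.

Lemma sum_vnorm2_outcomes v : \sum_o vnorm2 (E o *m v) = vnorm2 v.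
Proof.
apply: (@complexI R); rewrite rmorph_sum /=.
have Eo o : (vnorm2 (E o *m v))%:C = inner v (adjmx (E o) *m E o *m v).
  by rewrite -inner_vnorm2 -mulmxA [RHS]inner_mulmx adjmxK.
by rewrite (eq_bigr _ (fun o _ => Eo o)) -inner_sumr -mulmx_suml E_isometry mul1mx
  inner_vnorm2.
Qed.

Lemma sum_vnorm2_apply_seq k v :
  \sum_(t : k.-tuple 'I_m) vnorm2 (apply_seq E t v) = vnorm2 v.
Proof.
elim: k v => [|k IH] v; first by rewrite sum_tuple0.
by rewrite sum_tupleS (eq_bigr _ (fun o _ => IH _)) sum_vnorm2_outcomes.
Qed.

Lemma detect_acceptE k v : detect_accept lab E k v = vnorm2 v - detect_reject k v.
Proof.
rewrite -(sum_vnorm2_apply_seq k v).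
by rewrite (bigID (fun t : k.-tuple 'I_m => has (fun o => lab o != 0) t)) addrK.
Qed.

Lemma detect_reject_le k v : detect_reject k v <= vnorm2 v.
Proof.
rewrite -subr_ge0 -detect_acceptE sumr_ge0 // => t _; exact: vnorm2_ge0.
Qed.

End Detect.

Section Phases.
Variable R : realType.
Local Notation C := R[i].

Lemma expi_conj (a : R) : (expi a)^* = expi (- a) :> C.
Proof. by rewrite /expi /= cosN sinN. Qed.

Lemma expi_conjM (a : R) : (expi a)^* * expi a = 1 :> C.
Proof. by rewrite -csqnE /csqn /= cos2Dsin2. Qed.

Lemma expi0 : expi 0 = 1 :> C.
Proof. by rewrite /expi cos0 sin0. Qed.

Lemma expi_pi : expi pi = -1 :> C.
Proof. by rewrite /expi cospi sinpi; apply/eqP; rewrite eq_complex /= oppr0 !eqxx. Qed.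

Lemma expi_inj (a b : R) : - pi < a <= pi -> - pi < b <= pi ->
  expi a = expi b :> C -> a = b.
Proof.
move=> /andP[a1 a2] /andP[b1 b2] [cosab sinab].
have sin_lt0 x : - pi < x < 0 -> sin x < 0.
  move=> /andP[x1 x2]; rewrite -(opprK x) sinN oppr_lt0 sin_gt0_pi //.
  by rewrite oppr_gt0 x2 ltrNl.
case: (leP 0 a) => a0; case: (leP 0 b) => b0.
- by apply: cos_inj; rewrite // in_itv /= ?a0 ?b0.
- have := sin_ge0_pi (x := a); rewrite a0 a2 sinab => /(_ isT).
  by rewrite leNgt sin_lt0 // b1 b0.
- have := sin_ge0_pi (x := b); rewrite b0 b2 -sinab => /(_ isT).
  by rewrite leNgt sin_lt0 // a1 a0.
- apply: oppr_inj; apply: cos_inj; rewrite ?cosN // in_itv /= ?oppr_ge0 ?ltW //.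
  + by rewrite ltrNl.
  + by rewrite ltrNl.
Qed.

Lemma not_close_phase0 (D a : R) : D <= 1 -> D <= `|a| -> - pi < a <= pi ->
  ~ close_phase D 0 a.
Proof.
move=> D1 Da /andP[a1 a2] [k close].
have [k0|k0] := eqVneq k 0.
  by move: close; rewrite k0 mul0r subr0 sub0r normrN ltNge Da.
have k1 : 1 <= `|k%:~R : R| by rewrite -intr_norm ler1z; lia.
have pi2 := @pi_ge2 R.
have api : `|a| <= pi by rewrite ler_norml a2 andbT ltW // -ltrNl.
have kpi : `|k%:~R * (2 * pi)| = `|k%:~R : R| * (2 * pi).
  by rewrite normrM (ger0_norm (x := 2 * pi)) // mulr_ge0 ?pi_ge0.
have : `|k%:~R * (2 * pi)| <= `|0 - a - k%:~R * (2 * pi)| + `|a|.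
  have {1}-> : k%:~R * (2 * pi) = - (0 - a - k%:~R * (2 * pi)) - a :> R by ring.
  by rewrite (le_trans (ler_normD _ _)) // !normrN.
rewrite kpi.
have : 2 * pi <= `|k%:~R : R| * (2 * pi) by rewrite ler_peMl // mulr_ge0 // pi_ge0.
lra.
Qed.

End Phases.


Section Estimate.
Variable R : realType.
Local Notation C := R[i].
Variables (n : nat) (U : 'M[C]_n) (D : R) (m : nat).
Variables (lab : 'I_m -> R) (E : 'I_m -> 'M[C]_n).
Hypotheses (E_est : is_estimate U D lab E) (D_le1 : D <= 1).

Lemma detect_reject_far k (x : 'cV[C]_n) (a : R) :
  D <= `|a| -> - pi < a <= pi -> U *m x = expi a *: x ->
  detect_reject lab E k x <= (3^-1) ^+ k * vnorm2 x.
Proof.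
move=> Da a_pi Ux; have [E_iso E_eig _] := E_est.
have [Ex_eig close23] := E_eig x a a_pi Ux.
have [c Ex] := fin_all_exists Ex_eig.
rewrite (detect_reject_eigvec lab _ Ex); set q := \sum_(o | _) _.
have [x0|x0] := eqVneq (vnorm2 x) 0; first by rewrite x0 !mulr0.
have x_gt0 : 0 < vnorm2 x by rewrite lt_def x0 vnorm2_ge0.
have q0 : 0 <= q by rewrite sumr_ge0 // => o _; exact: csqn_ge0.
suff q_le : q <= 3^-1 by rewrite ler_pM2r // lerXn2r // ?nnegrE ?invr_ge0.
have -> : q = (\sum_(o | lab o == 0) vnorm2 (E o *m x)) / vnorm2 x.
  by rewrite mulr_suml; apply: eq_bigr => o _; rewrite Ex vnorm2Z mulfK.
rewrite ler_pdivrMr //.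
have far : \sum_(o | lab o == 0) vnorm2 (E o *m x) <=
    \sum_(o | ~~ `[< close_phase D (lab o) a >]) vnorm2 (E o *m x).
  rewrite big_mkcond [X in _ <= X]big_mkcond; apply: ler_sum => o _.
  case: eqP => [lab0|_]; last by case: ifP => _ //; exact: vnorm2_ge0.
  by rewrite ifT //; apply/negP => /asboolP; rewrite lab0; exact: not_close_phase0.
have := sum_vnorm2_outcomes E_iso x.
rewrite (bigID (fun o => `[< close_phase D (lab o) a >])) /=.
lra.
Qed.

Lemma detect_reject_eigvec_sum (I : finType) k (x : I -> 'cV[C]_n) (ph : I -> R) :
  adjmx U *m U = 1%:M ->
  (forall i, - pi < ph i <= pi) -> injective ph ->
  (forall i, U *m x i = expi (ph i) *: x i) ->
  detect_reject lab E k (\sum_i x i) <=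
    \sum_(i | `|ph i| < D) vnorm2 (x i) + (3^-1) ^+ k * vnorm2 (\sum_i x i).
Proof.
move=> Uu ph_pi ph_inj Ux; have [E_iso E_eig _] := E_est.
have orth i j : i != j -> inner (x i) (x j) = 0.
  move=> ij; apply: (eigvec_orth Uu (Ux i) (Ux j) (expi_conjM _)).
  by apply: contra ij => /eqP /(expi_inj (ph_pi i) (ph_pi j)) /ph_inj ->.
have Ex_eig o i : exists c, E o *m x i = c *: x i.
  exact: ((E_eig (x i) (ph i) (ph_pi i) (Ux i)).1 o).
rewrite detect_reject_sum_orth // vnorm2_sum_orth // mulr_sumr.
rewrite [X in _ <= X + _]big_mkcond -big_split.
apply: ler_sum => i _ /=; case: ltP => [_|far].
  by rewrite (le_trans (detect_reject_le lab E_iso _ _)) // lerDl mulr_ge0 ?vnorm2_ge0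
    ?exprn_ge0 ?invr_ge0.
by rewrite add0r (detect_reject_far _ far (ph_pi i) (Ux i)).
Qed.

End Estimate.

Lemma detect_accept_fixed (R : realType) n (U : 'M[R[i]]_n) D m (lab : 'I_m -> R) E
    k (w : 'cV[R[i]]_n) :
  is_estimate U D lab E -> U *m w = w -> detect_accept lab E k w = 0.
Proof.
move=> [E_iso E_eig E_one] Uw.
have Uw0 : U *m w = expi 0 *: w by rewrite expi0 scale1r.
have pi0 : - pi < (0 : R) <= pi by rewrite oppr_lt0 pi_gt0 pi_ge0.
have [c Ew] := fin_all_exists (E_eig w 0 pi0 Uw0).1.
rewrite detect_acceptE // (detect_reject_eigvec lab _ Ew).
have [->|w0] := eqVneq (vnorm2 w) 0; first by rewrite mulr0 subr0.
suff -> : \sum_(o | lab o == 0) csqn (c o) = 1 by rewrite expr1n mul1r subrr.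
apply: (mulIf w0); rewrite mul1r -{2}(E_one w Uw) mulr_suml.
by apply: eq_bigr => o _; rewrite Ew vnorm2Z.
Qed.

(* [QHT] is only an infimum, so we use some [y < T + delta] with small tail,
   where [delta] keeps every [1 / al j > T] above [y]. *)
Lemma QHT_small_phase_weight (R : realType) (eps T : R) J (d al : 'I_J -> R) dm1 :
  0 < eps < 1 -> 0 < T -> (forall j, 0 < al j) -> QHT eps d al dm1 <= T ->
  \sum_(j | al j < T^-1) 2 * d j ^+ 2 <= eps.
Proof.
move=> /andP[e0 e1] T0 al0 QHT_T.
set S := [set y : R | QH_tail d al dm1 y <= eps]%classic in QHT_T.
have inv_al_ge0 j : 0 <= (al j)^-1 by rewrite invr_ge0 ltW.
have S0 : (S !=set0)%classic.
  exists (\sum_j (al j)^-1 + pi^-1).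
  have y0 : 0 <= \sum_j (al j)^-1 + pi^-1 by rewrite addr_ge0 ?sumr_ge0 ?invr_ge0 ?pi_ge0.
  rewrite /S /= /QH_tail ltNge y0 /= big1 => [|j].
    by rewrite add0r ifN ?ltW // -leNgt lerDr sumr_ge0.
  rewrite ltNge; suff -> : (al j)^-1 <= \sum_j (al j)^-1 + pi^-1 by [].
  by rewrite (bigD1 j) //= -addrA lerDl addr_ge0 ?sumr_ge0 ?invr_ge0 ?pi_ge0.
set delta := \big[Num.min/1]_(j | al j < T^-1) ((al j)^-1 - T).
have delta0 : 0 < delta.
  apply: lt_bigmin => // j al_small.
  by rewrite subr_gt0 -[T]invrK ltf_pV2 ?posrE ?invr_gt0.
have T_delta : T < T + delta by rewrite ltrDl.
have [y Sy y_lt] := inf_lt S0 (le_lt_trans QHT_T T_delta).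
move: Sy; rewrite /S /= /QH_tail; case: ltP => y0 tail_y.
  by move: (lt_le_trans e1 tail_y); rewrite ltxx.
apply: le_trans tail_y; rewrite -[X in X <= _]addr0; apply: lerD; last first.
  by case: ifP => _ //; exact: sqr_ge0.
rewrite [X in _ <= X]big_mkcond [X in X <= _]big_mkcond /=; apply: ler_sum => j _.
case: ifP => al_small; last by case: ifP => _ //; rewrite mulr_ge0 // sqr_ge0.
suff -> : y < (al j)^-1 by [].
apply: (lt_le_trans y_lt); rewrite -lerBrDl.
exact: (bigmin_le_cond _ (P := fun j => al j < T^-1) (fun j => (al j)^-1 - T) al_small).
Qed.

Lemma detect_reps_bounds (R : realType) (c0 eps : R) : 0 < c0 -> 0 < eps < 1 ->
  c0 * ln eps^-1 <= (detect_reps c0 eps)%:R < c0 * ln eps^-1 + 1.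
Proof.
move=> c0_gt0 /andP[e0 e1].
have x0 : 0 < c0 * ln eps^-1 by rewrite mulr_gt0 // ln_gt0 // invf_gt1.
have -> : (detect_reps c0 eps)%:R = (Num.ceil (c0 * ln eps^-1))%:~R :> R.
  by rewrite /detect_reps natr_absz ger0_norm // ceil_ge0 (lt_trans _ x0) ?oppr_lt0.
have /andP[lt_ceil ->] := ceil_itv (c0 * ln eps^-1).
by rewrite -ltrBlDr -(intrB _ _ 1).
Qed.

Lemma inv3_expr_detect_reps (R : realType) (eps : R) : 0 < eps < 1 ->
  (3^-1) ^+ detect_reps (ln 3)^-1 eps <= eps.
Proof.
move=> eps01; have /andP[e0 _] := eps01.
have ln3 : 0 < ln (3 : R) by rewrite ln_gt0 // ltr1n.
have c0_gt0 : 0 < (ln (3 : R))^-1 by rewrite invr_gt0.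
have /andP[k_ge _] := detect_reps_bounds c0_gt0 eps01.
rewrite exprVn -[X in _ <= X]invrK lef_pV2 ?posrE ?invr_gt0 ?exprn_gt0 //.
rewrite -ler_ln ?posrE ?invr_gt0 ?exprn_gt0 // lnXn // -[ln 3 *+ _]mulr_natr.
by have := ler_wpM2l (ltW ln3) k_ge; rewrite mulrA mulfV ?gt_eqF // mul1r.
Qed.

Section Decomposition.
Variable R : realType.
Local Notation C := R[i].
Variables (n : nat) (U : 'M[C]_n) (v : 'cV[C]_n) (J : nat) (d0 dm1 : R).
Variables (d al : 'I_J -> R) (w0 wm1 : 'cV[C]_n) (wp : 'I_J -> 'cV[C]_n).
Hypotheses (U_real : conjmx U = U) (decomp : eigen_decomp U v d0 dm1 d al w0 wm1 wp).

(* The components of [v] other than the 1-eigenvector, indexed by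
   [-1, (w_j^+)_j, (w_j^-)_j], with their eigenphases in [(-pi, pi]]. *)
Definition decomp_vec (i : 'I_1 + ('I_J + 'I_J)) : 'cV[C]_n :=
  match i with
  | inl _ => dm1%:C *: wm1
  | inr (inl j) => (d j)%:C *: wp j
  | inr (inr j) => (d j)%:C *: conjmx (wp j)
  end.

Definition decomp_phase (i : 'I_1 + ('I_J + 'I_J)) : R :=
  match i with inl _ => pi | inr (inl j) => al j | inr (inr j) => - al j end.

Lemma decomp_vec_sum : d0 = 0 -> v = \sum_i decomp_vec i.
Proof.
have [-> _ _ _ _] := decomp; move=> ->; rewrite scale0r add0r addrC.
rewrite big_sumType big_ord1 big_sumType /= -big_split /=.
by congr (_ + _); apply: eq_bigr => j _; rewrite scalerDr.
Qed.

Lemma decomp_phase_itv i : - pi < decomp_phase i <= pi.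
Proof.
have [_ _ _ al_itv _] := decomp; have pi0 := @pi_gt0 R.
case: i => [_|[j|j]] /=; first by apply/andP; split; lra.
all: by have /andP[al0 alpi] := (al_itv j).1; apply/andP; split; lra.
Qed.

Lemma decomp_phase_inj : injective decomp_phase.
Proof.
have [_ _ _ al_itv al_inj] := decomp.
have al_pos j : 0 < al j < pi by case: (al_itv j).
case=> [i|[j|j]] [i'|[j'|j']] //= ph_eq.
all: first [ by rewrite (ord1 i) (ord1 i') | by rewrite (al_inj _ _ ph_eq)
           | by rewrite (al_inj _ _ (oppr_inj ph_eq)) | exfalso ].
all: try have /andP[al_j0 al_jpi] := al_pos j.
all: try have /andP[al_j'0 al_j'pi] := al_pos j'.
all: have := @pi_gt0 R; lra.
Qed.

Lemma decomp_vec_eigvec i : U *m decomp_vec i = expi (decomp_phase i) *: decomp_vec i.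
Proof.
have [_ _ wm1_eig al_itv _] := decomp.
have scale_eig (w : 'cV[C]_n) (l : C) (r : R) :
    r = 0 \/ U *m w = l *: w -> U *m (r%:C *: w) = l *: (r%:C *: w).
  by case=> [->|Uw]; rewrite ?scale0r ?mulmx0 ?scaler0 // -scalemxAr Uw !scalerA mulrC.
case: i => [_|[j|j]] /=; apply: scale_eig.
- by case: wm1_eig => [|[_ ->]]; [left | right; rewrite expi_pi scaleN1r].
- by case: (al_itv j).2 => [|[_ ->]]; [left | right].
- case: (al_itv j).2 => [|[_ Uw]]; [left | right] => //.
  by rewrite -expi_conj (conjmx_eigvec U_real Uw).
Qed.

Lemma decomp_small_phase_weight (D : R) : D <= pi ->
  \sum_(i | `|decomp_phase i| < D) vnorm2 (decomp_vec i) =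
  \sum_(j | al j < D) 2 * d j ^+ 2.
Proof.
have [_ _ _ al_itv _] := decomp => D_pi.
have al0 j : 0 <= al j by case/andP: (al_itv j).1 => /ltW.
rewrite big_mkcond big_sumType big_ord1 /= ger0_norm ?pi_ge0 // ltNge D_pi add0r.
rewrite big_sumType /= -big_split [RHS]big_mkcond; apply: eq_bigr => j _ /=.
rewrite normrN ger0_norm //; case: ifP => _; last by rewrite addr0.
have wp_unit : d j = 0 \/ vnorm2 (wp j) = 1 by case: (al_itv j).2 => [|[]]; [left|right].
by rewrite [X in _ + X]vnorm2Z vnorm2_conj -vnorm2Z vnorm2_real_scale // mulr_natl mulr2n.
Qed.

End Decomposition.

Lemma detect_calls_le (R : realType) (c0 CE eps T : R) (N : nat) :
  0 < c0 -> 0 < eps < 1 -> 0 <= CE -> 0 < T -> N%:R <= CE * T ->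
  (detect_reps c0 eps * N)%:R <= CE * (c0 + 1) * (1 + ln eps^-1) * T.
Proof.
move=> c0_gt0 eps01 CE0 T0 N_le; have /andP[e0 e1] := eps01.
have L0 : 0 < ln eps^-1 by rewrite ln_gt0 // invf_gt1.
have /andP[_ k_lt] := detect_reps_bounds c0_gt0 eps01.
rewrite natrM; apply: le_trans (ler_pM (ler0n _ _) (ler0n _ _) (ltW k_lt) N_le) _.
rewrite -subr_ge0 (_ : _ - _ = CE * T * (c0 + ln eps^-1)); last by ring.
exact: mulr_ge0 (mulr_ge0 CE0 (ltW T0)) (addr_ge0 (ltW c0_gt0) (ltW L0)).
Qed.

Section Walk.
Variable R : realType.
Local Notation C := R[i].
Variables (n : nat) (U2 : 'M[C]_n) (phi0 mu : 'cV[C]_n).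
Hypotheses (U2_unitary : unitary U2) (U2_phi0 : U2 *m phi0 = phi0).
Hypothesis U2_fixed : forall v, U2 *m v = v -> exists c, v = c *: phi0.
Local Notation U := (U2 *m reflection mu).

(* A fixed vector w of U2 U1 satisfies U1 w = U2^* w, so <phi0|U1 w> = <phi0|w>,
   which forces <mu|w> = 0; then w is fixed by U1, hence by U2, hence a multiple
   of phi0 orthogonal to mu. *)
Lemma walk_fixed_eq0 (w : 'cV[C]_n) : inner phi0 mu != 0 -> U *m w = w -> w = 0.
Proof.
move=> phi0_mu Uw.
have U1w : reflection mu *m w = adjmx U2 *m w by rewrite -{2}Uw !mulmxA U2_unitary mul1mx.
have : inner phi0 (reflection mu *m w) = inner phi0 w.
  by rewrite U1w inner_mulmx adjmxK U2_phi0.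
rewrite reflectionE innerBr innerZr => /eqP; rewrite subr_eq addrC -subr_eq subrr eq_sym.
rewrite !mulf_eq0 pnatr_eq0 (negbTE phi0_mu) orbF => /eqP mu_w.
have [c wE] : exists c, w = c *: phi0.
  by apply: U2_fixed; rewrite -{2}Uw -mulmxA reflectionE mu_w mulr0 scale0r subr0.
move: mu_w; rewrite wE innerZr (inner_conj phi0 mu) => /eqP.
by rewrite mulf_eq0 conjc_eq0 (negbTE phi0_mu) orbF => /eqP ->; rewrite scale0r.
Qed.

Lemma detect_accept_tilde_phi_orth D m (lab : 'I_m -> R) E k :
  is_estimate U D lab E -> inner phi0 mu = 0 ->
  detect_accept lab E k (tilde_phi phi0 mu) = 0.
Proof.
move=> E_est phi0_mu; have mu_phi0 : inner mu phi0 = 0.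
  by rewrite inner_conj phi0_mu conjc0.
rewrite /tilde_phi mu_phi0 scale0r subr0 (detect_accept_fixed _ E_est) //.
by rewrite -mulmxA reflectionE mu_phi0 mulr0 scale0r subr0.
Qed.

Hypotheses (U2_real : real_mx U2) (mu_real : real_mx mu).
Hypotheses (phi0_unit : vnorm2 phi0 = 1) (mu_unit : vnorm2 mu = 1).

Lemma detect_accept_tilde_phi_near J d0 dm1 (d al : 'I_J -> R) w0 wm1 wp
    (eps T : R) m (lab : 'I_m -> R) E k :
  eigen_decomp U (tilde_phi phi0 mu) d0 dm1 d al w0 wm1 wp ->
  0 < eps < 1 -> 1 <= T -> QHT eps d al dm1 <= T ->
  is_estimate U T^-1 lab E -> (3^-1) ^+ k <= eps -> inner phi0 mu != 0 ->
  `|detect_accept lab E k (tilde_phi phi0 mu) - vnorm2 (tilde_phi phi0 mu)| <= 2 * eps.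
Proof.
move=> decomp eps01 T1 QHT_T E_est q_le phi0_mu.
have T0 : 0 < T := lt_le_trans ltr01 T1.
have D_le1 : T^-1 <= 1 by rewrite invf_le1.
have Uu := unitary_mul_reflection mu_unit U2_unitary.
have U_real : conjmx U = U by rewrite conjmxM conjmx_reflection !conjmx_real.
have d00 : d0 = 0.
  have [_ [//|[w0_unit Uw0]] _ _ _] := decomp.
  move: w0_unit; rewrite (walk_fixed_eq0 phi0_mu Uw0) vnorm20 => /eqP.
  by rewrite eq_sym oner_eq0.
have phit_sum := decomp_vec_sum decomp d00.
have q0 : 0 <= (3^-1 : R) ^+ k by rewrite exprn_ge0 // invr_ge0.
rewrite detect_acceptE; last by case: E_est.
rewrite addrAC subrr add0r normrN ger0_norm ?detect_reject_ge0 // {1}phit_sum.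
apply: le_trans (detect_reject_eigvec_sum E_est D_le1 k Uu (decomp_phase_itv decomp)
  (decomp_phase_inj decomp) (decomp_vec_eigvec U_real decomp)) _.
rewrite -phit_sum (decomp_small_phase_weight decomp); last first.
  by apply: le_trans D_le1 _; have := @pi_ge2 R; lra.
have al_gt0 j : 0 < al j by have [_ _ _ /(_ j) [/andP[]]] := decomp.
have near := QHT_small_phase_weight eps01 T0 al_gt0 QHT_T.
have far := ler_pM q0 (vnorm2_ge0 _) q_le (vnorm2_tilde_phi_le1 mu_unit phi0_unit).
lra.
Qed.

End Walk.

Theorem theorem5 (R : realType) :
  exists c0 : R, 0 < c0 /\ exists C : R, 0 < C /\
  forall CE : R, 0 < CE -> exists C' : R, 0 < C' /\
  forall (n : nat) (U2 : 'M[R[i]]_n) (phi0 mu : 'cV[R[i]]_n) (eps T : R)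
    (J : nat) (d0 dm1 : R) (d al : 'I_J -> R) (w0 wm1 : 'cV[R[i]]_n)
    (wp : 'I_J -> 'cV[R[i]]_n)
    (m : nat) (lab : 'I_m -> R) (E : 'I_m -> 'M[R[i]]_n) (Ncalls : nat),
  real_mx U2 -> unitary U2 ->
  real_mx phi0 -> vnorm2 phi0 = 1 -> U2 *m phi0 = phi0 ->
  (forall v : 'cV[R[i]]_n, U2 *m v = v -> exists c : R[i], v = c *: phi0) ->
  real_mx mu -> vnorm2 mu = 1 ->
  let U := U2 *m reflection mu in
  let phit := tilde_phi phi0 mu in
  eigen_decomp U phit d0 dm1 d al w0 wm1 wp ->
  0 < eps < 1 ->
  Num.max 1 (QHT eps d al dm1) <= T ->
  is_estimate U T^-1 lab E ->
  Ncalls%:R <= CE / T^-1 ->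
  let k := detect_reps c0 eps in
  (inner phi0 mu != 0 ->
     `|detect_accept lab E k phit - vnorm2 phit| <= C * eps) /\
  (inner phi0 mu = 0 -> detect_accept lab E k phit = 0) /\
  (k * Ncalls)%:R <= C' * (1 + ln eps^-1) * T.
Proof.
have c0_gt0 : 0 < (ln (3 : R))^-1 by rewrite invr_gt0 ln_gt0 // ltr1n.
exists (ln 3)^-1; split => //; exists 2; split => // CE CE0.
exists (CE * ((ln 3)^-1 + 1)); split; first by rewrite mulr_gt0 // addr_gt0.
move=> n U2 phi0 mu eps T J d0 dm1 d al w0 wm1 wp m lab E Ncalls U2_real U2_unitary
  _ phi0_unit U2_phi0 U2_fixed mu_real mu_unit U phit decomp eps01 T_ge E_est N_le k.
have /andP[T1 QHT_T] : (1 <= T) && (QHT eps d al dm1 <= T) by rewrite -ge_max.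
split; [|split].
- exact: (detect_accept_tilde_phi_near U2_unitary U2_phi0 U2_fixed U2_real mu_real
    phi0_unit mu_unit decomp eps01 T1 QHT_T E_est (inv3_expr_detect_reps eps01)).
- exact: (detect_accept_tilde_phi_orth U2_phi0 k E_est).
- apply: detect_calls_le; rewrite ?(ltW CE0) ?(lt_le_trans ltr01 T1) //.
  by rewrite -[T in CE * T]invrK.
Qed.
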